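(* Let $N\ge 2$ and $R\ge 3$, and let $S=\lfloor R/3\rfloor$. For every randomized online algorithm for routing in the Clos network $C_{N,R}$, there is a sequence of flows, each with demand $1$ (and satisfying the demand assumption below), for which the expected congestion of the routing returned by the algorithm is at least $2-\tfrac{1}{2^S}$.
   Context: Clos network $C_{N,R}$: a directed graph with $N$ middle switches $M_1,\dots,M_N$, $R$ input switches $I_1,\dots,I_R$, $R$ output switches $O_1,\dots,O_R$, source servers $s_i^k$ and destination servers $t_i^k$ ($i\in[R]$, $k\in[N]$), and edges $s_i^kI_i$, $I_iM_m$, $M_mO_i$, $O_it_i^k$ for all $i\in[R]$, $m,k\in[N]$; all links have capacity $1$. A flow $f$ has a source server $s(f)$ of input switch $I_{i(f)}$, a destination server $t(f)$ of output switch $O_{j(f)}$, and a positive demand $\mathrm{dem}(f)$; a set of flows must have total demand at most $1$ leaving each source server and entering each destination server. A routing $r$ assigns each flow a single middle switch $r(f)\in[N]$; its congestion is $\max_{i\in[R],m\in[N]}\max\{\sum_{f:i(f)=i,r(f)=m}\mathrm{dem}(f),\ \sum_{f:j(f)=i,r(f)=m}\mathrm{dem}(f)\}$. A deterministic online algorithm defines a routing for every sequence of flows such that for every prefix $P$ of a sequence $F$, the routing of $P$ when given $P$ equals the routing of $P$ when given $F$. A randomized online algorithm is a probability distribution over deterministic online algorithms. *)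

From HB Require Import structures.
From mathcomp Require Import all_boot all_order all_algebra.
From mathcomp Require Import all_classical all_reals all_analysis.
Set Implicit Arguments. Unset Strict Implicit. Unset Printing Implicit Defensive.
Import Order.TTheory GRing.Theory Num.Theory.
Local Open Scope ring_scope.

(* A flow in the Clos network C_{N,R}: source server s_{i}^{k} (input switch
   I_i, server index k), destination server t_{j}^{l} (output switch O_j,
   server index l), and a demand (a real number in K). *)
Record flow (N R : nat) (K : Type) := Flow {
  fi : 'I_R;
  fk : 'I_N;
  fj : 'I_R;
  fl : 'I_N;
  dem : K
}.

Definition valid_flows (K : realType) (N R : nat) (F : seq (flow N R K)) : Prop :=
  all (fun f => 0 < dem f) F /\
  (forall (i : 'I_R) (k : 'I_N),
      \sum_(f <- F | (fi f == i) && (fk f == k)) dem f <= 1) /\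
  (forall (j : 'I_R) (l : 'I_N),
      \sum_(f <- F | (fj f == j) && (fl f == l)) dem f <= 1).

(* A routing of a sequence F of flows is a sequence r of middle switches with
   size r = size F: the p-th flow of F is routed through middle switch r_p. *)
Definition load_in (K : realType) (N R : nat) (F : seq (flow N R K))
    (r : seq 'I_N) (i : 'I_R) (m : 'I_N) : K :=
  \sum_(fr <- zip F r | (fi fr.1 == i) && (fr.2 == m)) dem fr.1.

Definition load_out (K : realType) (N R : nat) (F : seq (flow N R K))
    (r : seq 'I_N) (i : 'I_R) (m : 'I_N) : K :=
  \sum_(fr <- zip F r | (fj fr.1 == i) && (fr.2 == m)) dem fr.1.

(* congestion = max over i in [R], m in [N] of the in/out loads
   (loads are nonnegative for valid flows, so 0 is a neutral element). *)
Definition congestion (K : realType) (N R : nat) (F : seq (flow N R K))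
    (r : seq 'I_N) : K :=
  \big[Num.max/0]_(i < R) \big[Num.max/0]_(m < N)
     Num.max (load_in F r i m) (load_out F r i m).

Definition det_online_alg (K : realType) (N R : nat)
    (A : seq (flow N R K) -> seq 'I_N) : Prop :=
  (forall F, size (A F) = size F) /\
  (forall F n, A (take n F) = take n (A F)).

From HB Require Import structures.
From mathcomp Require Import all_boot all_order all_algebra.
From mathcomp Require Import all_classical all_reals all_analysis.
From mathcomp Require Import measurable_realfun zify lra.
Import Order.TTheory GRing.Theory Num.Theory.
Local Open Scope ring_scope.

Set Implicit Arguments.
Unset Strict Implicit.
Unset Printing Implicit Defensive.

(* Yao's principle with 2^S inputs, one per bit string b of length S.  Bit t
   is encoded on three switches i0, i1, i2: first N-1 unit flows I_i0 -> O_i0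
   and N-1 unit flows I_i1 -> O_i1, all avoiding one server z.  A routing of
   congestion < 2 gives conflicting flows distinct middle switches, so each of
   these rows leaves exactly one middle switch free.  Bit 0 then adds a flow
   I_i0 -> O_i1, which conflicts with both rows, so the two free switches
   coincide; bit 1 adds flows I_i2 -> O_i0 and I_i2 -> O_i1, which conflict
   with each other and with one row each, so the free switches differ.  An online algorithm fixes the rows
   before seeing the bit, hence routes at most one of the 2^S inputs with
   congestion < 2, and every input has congestion >= 1.  The congestions of
   any deterministic algorithm thus sum to at least 2 * 2^S - 1, and for a
   randomized one some input has expected congestion >= 2 - 1/2^S. *)

Lemma eq_of_notin_uniq (T : finType) (s : seq T) (x y : T) :
  uniq s -> (#|T| <= (size s).+1)%N -> x \notin s -> y \notin s -> x = y.
Proof.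
move=> s_uniq cardT xNs yNs; apply/eqP/negPn/negP => xNy.
have : (size [:: x, y & s] <= #|T|)%N.
  rewrite cardE; apply: uniq_leq_size => [|u _]; last by rewrite mem_enum.
  by rewrite /= inE negb_or xNy xNs yNs s_uniq.
by move=> /leq_trans/(_ cardT); rewrite ltnn.
Qed.

Lemma sumr_unit_count (V : pzSemiRingType) (T : Type) (s : seq T) (P : pred T)
    (d : T -> V) :
  all (fun x => d x == 1) s -> \sum_(x <- s | P x) d x = (count P s)%:R.
Proof.
elim: s => [|x s IH] /=; first by rewrite big_nil.
case/andP=> /eqP dx1 /IH sumE; rewrite big_cons sumE.
by case: (P x); rewrite /= ?dx1 ?add1n ?mulrS.
Qed.

Lemma all_zip1 (T1 T2 : Type) (p : pred T1) (s : seq T1) (t : seq T2) :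
  all p s -> all (fun u => p u.1) (zip s t).
Proof. by elim: s t => [|x s IH] [|y t] //= /andP[-> /(IH t)]. Qed.

Section Routing.
Variables (K : realType) (N R : nat).
Implicit Types (F G h : seq (flow N R K)) (r : seq 'I_N).
Implicit Types (s : seq (flow N R K * 'I_N)) (u v : flow N R K * 'I_N).

Definition conflict (f g : flow N R K) := (fi f == fi g) || (fj f == fj g).

Definition compatible u v := conflict u.1 v.1 ==> (u.2 != v.2).

Definition conflict_free s := pairwise compatible s.

Lemma conflictC f g : conflict f g = conflict g f.
Proof. by rewrite /conflict eq_sym [fj f == _]eq_sym. Qed.

Lemma compatibleC u v : compatible u v = compatible v u.
Proof. by rewrite /compatible conflictC eq_sym. Qed.

Lemma conflict_free_catl s1 s2 : conflict_free (s1 ++ s2) -> conflict_free s1.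
Proof. by rewrite /conflict_free pairwise_cat => /and3P[]. Qed.

Lemma conflict_free_catr s1 s2 : conflict_free (s1 ++ s2) -> conflict_free s2.
Proof. by rewrite /conflict_free pairwise_cat => /and3P[]. Qed.

Lemma notin_compatible s v :
  all (fun u => conflict u.1 v.1) s -> all (compatible^~ v) s ->
  v.2 \notin unzip2 s.
Proof.
elim: s => //= u s IH /andP[cuv cs] /andP[huv hs].
by rewrite inE negb_or IH // andbT eq_sym; move: huv; rewrite /compatible cuv.
Qed.

Lemma uniq_conflict_free_at s i :
  all (fun u => fi u.1 == i) s -> conflict_free s -> uniq (unzip2 s).
Proof.
elim: s => //= u s IH /andP[/eqP ui si] /andP[hu hs]; rewrite IH // andbT.
apply: notin_compatible.
  by apply: sub_all si => v /eqP vi; rewrite /conflict vi ui eqxx.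
by apply: sub_all hu => v; rewrite compatibleC.
Qed.

Lemma load_le_congestion F r i m :
  load_in F r i m <= congestion F r /\ load_out F r i m <= congestion F r.
Proof.
have : Num.max (load_in F r i m) (load_out F r i m) <= congestion F r.
  exact: le_trans (le_bigmax _ _ m) (le_bigmax _ _ i).
by rewrite ge_max => /andP[].
Qed.

Lemma congestion_ge1 F r :
  all (fun f => dem f == 1) F -> size r = size F -> (0 < size F)%N ->
  1 <= congestion F r.
Proof.
case: F r => [|f F] [|c r] // F1 _ _.
have [load_le _] := load_le_congestion (f :: F) (c :: r) (fi f) c.
apply: le_trans load_le; rewrite /load_in sumr_unit_count; last exact: all_zip1 F1.
by rewrite ler1n /= !eqxx.
Qed.

Lemma conflict_free_of_count s :
  (forall i m, count (fun u => (fi u.1 == i) && (u.2 == m)) s <= 1)%N ->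
  (forall i m, count (fun u => (fj u.1 == i) && (u.2 == m)) s <= 1)%N ->
  conflict_free s.
Proof.
elim: s => //= u s IH cnt_in cnt_out; apply/andP; split; last first.
  apply: IH => i m;
    [apply: leq_trans (cnt_in i m) | apply: leq_trans (cnt_out i m)]; exact: leq_addl.
have once (key : flow N R K -> 'I_R) :
    (count (fun v => (key v.1 == key u.1) && (v.2 == u.2)) (u :: s) <= 1)%N ->
    all (fun v => (key u.1 == key v.1) ==> (u.2 != v.2)) s.
  rewrite /= !eqxx add1n ltnS leqn0 => /eqP cnt0.
  have : ~~ has (fun v => (key v.1 == key u.1) && (v.2 == u.2)) s.
    by rewrite has_count cnt0.
  rewrite -all_predC; apply: sub_all => v /=.
  by rewrite (eq_sym (key u.1)) (eq_sym u.2); case: (key v.1 == key u.1).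
have in_once := once (@fi _ _ _) (cnt_in (fi u.1) u.2).
have out_once := once (@fj _ _ _) (cnt_out (fj u.1) u.2).
move: (conj in_once out_once) => /andP; rewrite -all_predI.
apply: sub_all => v /andP[].
by rewrite /compatible /conflict; case: (fi _ == _); case: (fj _ == _).
Qed.

Lemma conflict_free_of_congestion_lt2 F r :
  all (fun f => dem f == 1) F -> congestion F r < 2 -> conflict_free (zip F r).
Proof.
move=> F1 lt2; have Fr1 := all_zip1 r F1.
apply: conflict_free_of_count => i m.
  have := le_lt_trans (load_le_congestion F r i m).1 lt2.
  by rewrite /load_in sumr_unit_count // ltr_nat ltnS.
have := le_lt_trans (load_le_congestion F r i m).2 lt2.
by rewrite /load_out sumr_unit_count // ltr_nat ltnS.
Qed.

Definition src (f : flow N R K) := (fi f, fk f).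
Definition dst (f : flow N R K) := (fj f, fl f).

Lemma valid_flows_of_keys F :
  all (fun f => dem f == 1) F ->
  (forall p, count (fun f => src f == p) F <= 1)%N ->
  (forall p, count (fun f => dst f == p) F <= 1)%N -> valid_flows F.
Proof.
move=> F1 src1 dst1; split; [|split].
- by apply: sub_all F1 => f /eqP ->; exact: ltr01.
- move=> i k; rewrite sumr_unit_count // -[1]/(1%:R) ler_nat.
  by rewrite (eq_count (a2 := fun f => src f == (i, k))) // => f; rewrite xpair_eqE.
- move=> j l; rewrite sumr_unit_count // -[1]/(1%:R) ler_nat.
  by rewrite (eq_count (a2 := fun f => dst f == (j, l))) // => f; rewrite xpair_eqE.
Qed.

Definition on_switches (S : seq 'I_R) (f : flow N R K) := (fi f \in S) && (fj f \in S).

Lemma on_switches_sub S S' f : {subset S <= S'} -> on_switches S f -> on_switches S' f.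
Proof. by move=> sub /andP[/sub fiS' /sub fjS']; apply/andP. Qed.

Section Gadget.
Variables z z' : 'I_N.

Definition row (i : 'I_R) : seq (flow N R K) :=
  [seq Flow i k i k 1 | k <- enum (predC1 z)].

Definition probe (i0 i1 i2 : 'I_R) (x : bool) : seq (flow N R K) :=
  if x then [:: Flow i2 z i0 z 1; Flow i2 z' i1 z 1] else [:: Flow i0 z i1 z 1].

Definition gadget i0 i1 i2 x := row i0 ++ row i1 ++ probe i0 i1 i2 x.

Lemma size_row i : size (row i) = N.-1.
Proof. by rewrite size_map -cardE cardC1 card_ord. Qed.

Lemma row_conflict i r g :
  (fi g == i) || (fj g == i) -> all (fun u => conflict u.1 g) (zip (row i) r).
Proof.
move=> gi; apply: (all_zip1 (p := conflict^~ g)); rewrite all_map; apply/allP => k _.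
by rewrite /conflict /= ![i == _]eq_sym.
Qed.

Lemma row_uniq_switches i r :
  size r = size (row i) -> conflict_free (zip (row i) r) -> uniq r.
Proof.
move=> sr /(uniq_conflict_free_at (i := i)); rewrite unzip2_zip ?sr //.
apply; apply: (all_zip1 (p := fun f => fi f == i)).
by rewrite all_map; apply/allP => k _; exact: eqxx.
Qed.

Lemma row_switch_notin i r v :
  size r = size (row i) -> (fi v.1 == i) || (fj v.1 == i) ->
  all (compatible^~ v) (zip (row i) r) -> v.2 \notin r.
Proof.
move=> sr vi /(notin_compatible (row_conflict r vi)).
by rewrite unzip2_zip ?sr.
Qed.

Lemma gadget_routings_excl i0 i1 i2 rA rB c c' :
  size rA = size (row i0) -> size rB = size (row i1) ->
  size c = 1%N -> size c' = 2 ->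
  conflict_free (zip (gadget i0 i1 i2 false) (rA ++ rB ++ c)) ->
  conflict_free (zip (gadget i0 i1 i2 true) (rA ++ rB ++ c')) -> False.
Proof.
move=> sA sB; case: c => [|c1 []] // _; case: c' => [|c2 [|c3 []]] // _.
rewrite /gadget !(zip_cat _ _ (esym sA)) !(zip_cat _ _ (esym sB)) /=.
rewrite /conflict_free !pairwise_cat !allrel_catr !allrel_consr !allrel0r /= !andbT.
case/and4P=> /andP[_ c1A] fA c1B fB /and5P[/and3P[_ c2A _] _ /andP[_ c3B] _ c23].
have uA := row_uniq_switches sA fA; have uB := row_uniq_switches sB fB.
have n1A : c1 \notin rA by apply: row_switch_notin sA _ c1A; rewrite /= eqxx.
have n2A : c2 \notin rA by apply: row_switch_notin sA _ c2A; rewrite /= eqxx orbT.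
have n1B : c1 \notin rB by apply: row_switch_notin sB _ c1B; rewrite /= eqxx orbT.
have n3B : c3 \notin rB by apply: row_switch_notin sB _ c3B; rewrite /= eqxx orbT.
have row_card i r : size r = size (row i) -> (#|'I_N| <= (size r).+1)%N.
  by rewrite size_row card_ord => ->; exact: leqSpred.
move: c23; rewrite /compatible /conflict /= eqxx /=.
by rewrite -(eq_of_notin_uniq uA (row_card _ _ sA) n1A n2A)
  -(eq_of_notin_uniq uB (row_card _ _ sB) n1B n3B) eqxx.
Qed.

(* Bit t is encoded on the switches ws_3t, ws_3t+1, ws_3t+2; bits for which
   ws has no such switches are dropped. *)
Fixpoint instance (ws : seq 'I_R) (bs : seq bool) {struct bs} : seq (flow N R K) :=
  match ws, bs with
  | i0 :: i1 :: i2 :: ws', x :: bs' => gadget i0 i1 i2 x ++ instance ws' bs'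
  | _, _ => [::]
  end.

Lemma size_instance_gt0 ws bs :
  (0 < size bs)%N -> (3 <= size ws)%N -> (0 < size (instance ws bs))%N.
Proof.
case: ws bs => [|i0 [|i1 [|i2 ws]]] [|x bs] //= _ _.
by rewrite /gadget !size_cat; case: x => /=; lia.
Qed.

Section OnlineRouting.
Variable A : seq (flow N R K) -> seq 'I_N.
Hypothesis A_online : det_online_alg A.

Lemma online_cat F G : exists2 c, size c = size G & A (F ++ G) = A F ++ c.
Proof.
have [A_size A_take] := A_online.
exists (drop (size F) (A (F ++ G))).
  by rewrite size_drop A_size size_cat addKn.
by rewrite -{2}(take_size_cat G (erefl (size F))) A_take cat_take_drop.
Qed.

Definition routed_conflict_free F := conflict_free (zip F (A F)).

Lemma routed_conflict_free_catl F G :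
  routed_conflict_free (F ++ G) -> routed_conflict_free F.
Proof.
have [c _ eA] := online_cat F G.
rewrite /routed_conflict_free eA zip_cat => [/conflict_free_catl //|].
by rewrite A_online.1.
Qed.

Lemma routed_gadget_excl h i0 i1 i2 :
  routed_conflict_free (h ++ gadget i0 i1 i2 false) ->
  routed_conflict_free (h ++ gadget i0 i1 i2 true) -> False.
Proof.
have [rA sA eA] := online_cat h (row i0).
have [rB sB eB] := online_cat (h ++ row i0) (row i1).
have routing x : exists2 c, size c = size (probe i0 i1 i2 x) &
    A (h ++ gadget i0 i1 i2 x) = A h ++ rA ++ rB ++ c.
  have [c sc ec] := online_cat ((h ++ row i0) ++ row i1) (probe i0 i1 i2 x).
  by exists c; rewrite // /gadget !catA ec eB eA -!catA.
have [c sc ec] := routing false; have [c' sc' ec'] := routing true.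
rewrite /routed_conflict_free ec ec' !(zip_cat _ _ (esym (A_online.1 h))).
move=> /conflict_free_catr free /conflict_free_catr free'.
exact: gadget_routings_excl sA sB sc sc' free free'.
Qed.

Lemma routed_instance_excl bs bs' ws h :
  size bs = size bs' -> (3 * size bs <= size ws)%N -> bs != bs' ->
  routed_conflict_free (h ++ instance ws bs) ->
  routed_conflict_free (h ++ instance ws bs') -> False.
Proof.
elim: bs bs' ws h => [|x bs IH] [|x' bs'] [|i0 [|i1 [|i2 ws]]] h //= [sz] le_ws;
  try by move=> *; lia.
rewrite eqseq_cons (catA h (gadget _ _ _ x)) (catA h (gadget _ _ _ x')).
case: (eqVneq x x') => [<- /= neq_bs | neq_x _].
  apply: IH sz _ neq_bs.
  by move: le_ws; rewrite mulnS addnC -(addn3 (size ws)) leq_add2r.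
move=> /routed_conflict_free_catl + /routed_conflict_free_catl.
case: x x' neq_x => [] [] // _ free free';
  [exact: routed_gadget_excl free' free | exact: routed_gadget_excl free free'].
Qed.

End OnlineRouting.

Definition row_keys (i : 'I_R) := [seq (i, k) | k <- enum (predC1 z)].

Lemma map_src_row i : map src (row i) = row_keys i.
Proof. by rewrite -map_comp. Qed.

Lemma map_dst_row i : map dst (row i) = row_keys i.
Proof. by rewrite -map_comp. Qed.

Lemma mem_row_keys i (p : 'I_R * 'I_N) : (p \in row_keys i) = (p.1 == i) && (p.2 != z).
Proof.
case: p => j k; apply/mapP/andP => /= [[k' + [-> ->]] | [/eqP -> kz]].
  by rewrite mem_enum.
by exists k; rewrite ?mem_enum.
Qed.

Lemma uniq_row_keys_cat i0 i1 ks :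
  i0 != i1 -> uniq ks -> all (fun p => (p.1 \notin [:: i0; i1]) || (p.2 == z)) ks ->
  uniq (row_keys i0 ++ row_keys i1 ++ ks).
Proof.
move=> i01 uks hks.
have urk i : uniq (row_keys i) by rewrite map_inj_uniq ?enum_uniq // => k k' [].
have fresh i : i \in [:: i0; i1] -> ~~ has (mem (row_keys i)) ks.
  move=> ii; rewrite -all_predC; apply: sub_all hks => p /=; rewrite mem_row_keys.
  by case/orP=> [|/eqP ->]; [apply: contra => /andP[/eqP ->] | rewrite eqxx andbF].
rewrite !cat_uniq !urk uks has_cat negb_or !fresh ?inE ?eqxx ?orbT //= !andbT -all_predC.
apply/allP => p /=; rewrite !mem_row_keys => /andP[/eqP -> _].
by rewrite eq_sym (negbTE i01).
Qed.

Lemma uniq_src_gadget i0 i1 i2 x :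
  z != z' -> uniq [:: i0; i1; i2] -> uniq (map src (gadget i0 i1 i2 x)).
Proof.
rewrite /= !inE negb_or => zz' /and3P[/andP[i01 i02] i12 _].
rewrite !map_cat !map_src_row; apply: uniq_row_keys_cat => //.
  by case: x; rewrite //= inE xpair_eqE /= eqxx zz'.
by case: x; rewrite /= !inE ?eqxx ?orbT // !negb_or ![i2 == _]eq_sym i02 i12.
Qed.

Lemma uniq_dst_gadget i0 i1 i2 x :
  uniq [:: i0; i1; i2] -> uniq (map dst (gadget i0 i1 i2 x)).
Proof.
rewrite /= !inE negb_or => /and3P[/andP[i01 _] _ _].
rewrite !map_cat !map_dst_row; apply: uniq_row_keys_cat => //.
  by case: x; rewrite //= inE xpair_eqE /= (negbTE i01).
by case: x; rewrite /= !eqxx ?orbT.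
Qed.

Lemma gadget_switches i0 i1 i2 x :
  all (on_switches [:: i0; i1; i2]) (gadget i0 i1 i2 x).
Proof.
have row_on i : i \in [:: i0; i1; i2] -> all (on_switches [:: i0; i1; i2]) (row i).
  by move=> iS; rewrite all_map; apply/allP => k _; rewrite /on_switches /= iS.
rewrite !all_cat !row_on ?inE ?eqxx ?orbT //.
by case: x; rewrite /on_switches /= !inE !eqxx ?orbT.
Qed.

Lemma gadget_unit_demands i0 i1 i2 x : all (fun f => dem f == 1) (gadget i0 i1 i2 x).
Proof.
have row_unit i : all (fun f => dem f == 1) (row i).
  by rewrite all_map; apply/allP => k _; exact: eqxx.
by rewrite !all_cat !row_unit; case: x; rewrite /= eqxx.
Qed.

Lemma instance_unit_demands ws bs : all (fun f => dem f == 1) (instance ws bs).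
Proof.
elim: bs ws => [|x bs IH] [|i0 [|i1 [|i2 ws]]] //=.
by rewrite all_cat gadget_unit_demands IH.
Qed.

Lemma instance_switches ws bs : all (on_switches ws) (instance ws bs).
Proof.
elim: bs ws => [|x bs IH] [|i0 [|i1 [|i2 ws]]] //=; rewrite all_cat.
have -> : [:: i0, i1, i2 & ws] = [:: i0; i1; i2] ++ ws by [].
apply/andP; split; [apply: sub_all (gadget_switches i0 i1 i2 x) | apply: sub_all (IH ws)];
  by move=> f; apply: on_switches_sub => i; rewrite mem_cat => ->; rewrite ?orbT.
Qed.

Section Keys.
Variable key : flow N R K -> 'I_R * 'I_N.
Hypothesis key_switch : forall f, (key f).1 \in [:: fi f; fj f].

Lemma count_key_eq0 S F p :
  all (on_switches S) F -> p.1 \notin S -> count (fun f => key f == p) F = 0.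
Proof.
move=> sS pS; apply/eqP; rewrite -leqn0 leqNgt -has_count -all_predC.
apply: sub_all sS => f /andP[fiS fjS] /=; apply: contra pS => /eqP <-.
by have := key_switch f; rewrite !inE => /orP[] /eqP ->.
Qed.

Lemma count_key_instance ws bs p :
  (forall i0 i1 i2 x, uniq [:: i0; i1; i2] -> uniq (map key (gadget i0 i1 i2 x))) ->
  uniq ws -> (count (fun f => key f == p) (instance ws bs) <= 1)%N.
Proof.
move=> key_gadget; elim: bs ws => [|x bs IH] [|i0 [|i1 [|i2 ws]]] //.
rewrite -[[:: i0, i1, i2 & ws]]/([:: i0; i1; i2] ++ ws) cat_uniq /=.
move=> /and3P[uS disj uws].
rewrite count_cat; have [pS | pNS] := boolP (p.1 \in [:: i0; i1; i2]).
  rewrite (count_key_eq0 (instance_switches ws bs)) ?addn0; last first.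
    by apply: contra disj => pws; apply/hasP; exists p.1.
  rewrite -[count _ _]/(count (preim key (pred1 p)) _) -count_map.
  by rewrite count_uniq_mem ?leq_b1 ?key_gadget.
by rewrite (count_key_eq0 (gadget_switches i0 i1 i2 x) pNS) IH.
Qed.

End Keys.

Lemma valid_instance ws bs : z != z' -> uniq ws -> valid_flows (instance ws bs).
Proof.
move=> zz' uws; apply: valid_flows_of_keys (instance_unit_demands ws bs) _ _ => p.
  apply: count_key_instance => // [f | i0 i1 i2 x]; first by rewrite mem_head.
  exact: uniq_src_gadget.
apply: count_key_instance => // [f | i0 i1 i2 x]; first by rewrite !inE eqxx orbT.
exact: uniq_dst_gadget.
Qed.

End Gadget.
End Routing.

Lemma sum_ge_of_unique_lt2 (K : realFieldType) (I : finType) (x : I -> K) :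
  (forall i, 1 <= x i) -> (forall i j, x i < 2 -> x j < 2 -> i = j) ->
  2 *+ #|I| - 1 <= \sum_i x i.
Proof.
move=> x_ge1 x_lt2_uniq.
have [[i xi_lt2] | /forallNP x_ge2] := pselect (exists i, x i < 2).
  have rest : 2 *+ #|I|.-1 <= \sum_(j | j != i) x j.
    rewrite -(cardC1 i) -sumr_const; apply: ler_sum => j ji; rewrite leNgt.
    by apply: contra ji => /(x_lt2_uniq _ _ xi_lt2) <-.
  have cardI : #|I| = #|I|.-1.+1 by rewrite prednK //; apply/card_gt0P; exists i.
  rewrite (bigD1 i) //= cardI mulrS; have := x_ge1 i; lra.
have : 2 *+ #|I| <= \sum_i x i.
  by rewrite -sumr_const; apply: ler_sum => i _; rewrite leNgt; apply/negP/x_ge2.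
lra.
Qed.

Local Open Scope ereal_scope.

Lemma exists_ge_of_sum_ge (K : realDomainType) (I : finType) (s : I -> \bar K) (c : K) :
  (0 < #|I|)%N -> (forall i, 0 <= s i) -> (c *+ #|I|)%:E <= \sum_i s i ->
  exists i, c%:E <= s i.
Proof.
move=> I0 s_ge0 le_sum; apply: contrapT => /forallNP s_lt.
have {}s_lt i : s i < c%:E by rewrite ltNge; apply/negP/s_lt.
have s_fin i : s i \is a fin_num by rewrite ge0_fin_numE // (lt_trans (s_lt i)) ?ltry.
move: le_sum; rewrite -(EFin_sum_fine _ (fun i _ => s_fin i)) lee_fin -sumr_const.
rewrite leNgt => /negP; apply; apply: ltr_sum.
  by have /card_gt0P[i _] := I0; apply/hasP; exists i; rewrite ?mem_index_enum.
by move=> i _; rewrite -lte_fin fineK.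
Qed.

Local Open Scope classical_set_scope.

Lemma measurable_fun_sized_seq (d d' : measure_display) (Omega : measurableType d)
    (T' : measurableType d') (T : finType) (X : Omega -> seq T) (n : nat)
    (g : seq T -> T') :
  (forall w, size (X w) = n) -> (forall r, measurable [set w | X w = r]) ->
  measurable_fun setT (g \o X).
Proof.
move=> X_size X_meas _ Y mY; rewrite setTI.
have -> : (g \o X) @^-1` Y =
    \bigcup_(r in [set r : n.-tuple T | Y (g r)]) [set w | X w = r].
  apply/seteqP; split => w /=.
    by move=> Yw; exists (Tuple (introT eqP (X_size w))).
  by case=> r /= Yr ->.
by apply: fin_bigcup_measurable; [exact: finite_finset | move=> r _; exact: X_meas].
Qed.

Lemma exists_integral_ge (d : measure_display) (Omega : measurableType d) (K : realType)
    (P : probability Omega K) (I : finType) (i0 : I) (g : I -> Omega -> K) (c : K) :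
  (forall i, measurable_fun setT (fun w => (g i w)%:E)) ->
  (forall i w, 0 <= g i w)%R -> (forall w, c *+ #|I| <= \sum_i g i w)%R ->
  exists i, c%:E <= \int[P]_(w in setT) (g i w)%:E.
Proof.
move=> g_meas g_ge0 g_sum.
have int_ge0 i : 0 <= \int[P]_(w in setT) (g i w)%:E.
  by apply: integral_ge0 => w _; rewrite lee_fin.
have [c_le0 | c_gt0] := leP c 0%R.
  by exists i0; apply: le_trans (int_ge0 i0); rewrite lee_fin.
apply: exists_ge_of_sum_ge => //; first by apply/card_gt0P; exists i0.
rewrite -ge0_integral_sum //; last by move=> i w _; rewrite lee_fin.
have -> : (c *+ #|I|)%:E = \int[P]_(w in setT) (cst (c *+ #|I|)%:E w).
  by rewrite integral_cst // -[LHS]mule1; congr (_ * _); exact/esym/probability_setT.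
apply: ge0_le_integral => //.
- by move=> w _; rewrite lee_fin mulrn_wge0 // ltW.
- exact: emeasurable_sum.
- by move=> w _; rewrite sumEFin lee_fin.
Qed.

Local Close Scope classical_set_scope.
Local Close Scope ereal_scope.

Theorem mainTheorem6 (K : realType) (N R : nat) (hN : (2 <= N)%N) (hR : (3 <= R)%N)
  (d : measure_display) (Omega : measurableType d) (P : probability Omega K)
  (A : Omega -> seq (flow N R K) -> seq 'I_N)
  (hdet : forall w, det_online_alg (A w))
  (hmeas : forall (F : seq (flow N R K)) (r : seq 'I_N),
      measurable [set w | A w F = r]) :
  exists F : seq (flow N R K),
    valid_flows F /\ all (fun f => dem f == 1) F /\
    ((2 - 1 / 2 ^+ (R %/ 3) : K)%:E <=
       \int[P]_(w in [set: Omega]) (congestion F (A w F))%:E)%E.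
Proof.
pose z : 'I_N := Ordinal (ltnW hN); pose z' : 'I_N := Ordinal hN.
pose S := (R %/ 3)%N; pose inst (b : S.-tuple bool) := instance K z z' (enum 'I_R) b.
have S_le : (3 * S <= size (enum 'I_R))%N by rewrite size_enum_ord mulnC leq_trunc_div.
have inst_unit b : all (fun f => dem f == 1) (inst b) by exact: instance_unit_demands.
have inst_size b : (0 < size (inst b))%N.
  by apply: size_instance_gt0; [rewrite size_tuple divn_gt0 | rewrite size_enum_ord].
pose cong b w := congestion (inst b) (A w (inst b)).
have cong_ge1 b w : 1 <= cong b w.
  exact: congestion_ge1 (inst_unit b) ((hdet w).1 _) (inst_size b).
have cong_sum w : (2 - 1 / 2 ^+ S) *+ #|{: S.-tuple bool}| <= \sum_b cong b w.
  have -> : (2 - 1 / 2 ^+ S) *+ #|{: S.-tuple bool}| = 2 *+ #|{: S.-tuple bool}| - 1 :> K.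
    rewrite card_tuple card_bool mulrnBl; congr (_ - _).
    by rewrite -[LHS]mulr_natr natrX div1r mulVf // expf_neq0 // pnatr_eq0.
  apply: sum_ge_of_unique_lt2 => // b b' lt_b lt_b'; apply/eqP/negPn/negP => neq.
  apply: (routed_instance_excl (hdet w) (h := [::]) _ _ neq
    (conflict_free_of_congestion_lt2 (inst_unit b) lt_b)
    (conflict_free_of_congestion_lt2 (inst_unit b') lt_b')).
    by rewrite (size_tuple b) (size_tuple b').
  by rewrite (size_tuple b).
have [b int_ge] := exists_integral_ge P (nseq_tuple S false) (c := 2 - 1 / 2 ^+ S)
  (fun b => measurable_fun_sized_seq (fun r => (congestion (inst b) r)%:E)
    (fun w => (hdet w).1 (inst b)) (hmeas (inst b)))
  (fun b w => le_trans ler01 (cong_ge1 b w)) cong_sum.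
exists (inst b); split; last exact: (conj (inst_unit b) int_ge).
by apply: valid_instance; rewrite ?enum_uniq.
Qed.
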